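(* Let $(\beta_n),(\gamma_n)$ be sequences of positive real numbers that are non-decreasing, satisfy $\gamma_n\ge\beta_n$ and $\gamma_n-\beta_n\to\infty$. Let $t=(t_n)$ be a sequence of positive real numbers with $\liminf_{n}t_n>0$ and $T_{\beta\gamma(n)}:=\sum_{k\in[\beta_n,\gamma_n]}t_k\to\infty$. Let $0<\theta_1\le\theta_2\le1$. Suppose $\liminf_{n\to\infty}\frac{\gamma_n}{T_{\beta\gamma(n)}}>1$ and $0<\beta_n\le1$ for all $n$. Let $\hat f_k,\hat f:[a,b]\to L(\mathbb R)$ be fuzzy functions such that for every $x\in[a,b]$, $$\frac{1}{T_{\beta\gamma(n)}^{\theta_1}}\sum_{k\in[\beta_n,\gamma_n]}t_k\,d(\hat f_k(x),\hat f(x))\to0 .$$ Then for every $\varepsilon>0$ and every $x\in[a,b]$, $$\lim_{n\to\infty}\frac{1}{T_{\beta\gamma(n)}^{\theta_2}}\Big|\{k\in\mathbb N: k\le T_{\beta\gamma(n)},\ t_k\,d(\hat f_k(x),\hat f(x))\ge\varepsilon\}\Big|=0 .$$ That is, $N^{\theta_1}_{\beta\gamma}(t)\subset SP^{\theta_2}_{\beta\gamma}(t)$.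
   Context: $L(\mathbb R)$ is the set of fuzzy real numbers (normal, fuzzy convex, upper semicontinuous maps $\mathbb R\to[0,1]$ with compact support), with $\alpha$-cuts $[(\hat x)^-_\alpha,(\hat x)^+_\alpha]$ and metric $d(\hat x,\hat y)=\sup_{0\le\alpha\le1}\max\{|(\hat x)^-_\alpha-(\hat y)^-_\alpha|,|(\hat x)^+_\alpha-(\hat y)^+_\alpha|\}$. Sums $\sum_{k\in[\beta_n,\gamma_n]}$ range over positive integers $k$ in the interval. $|\cdot|$ denotes cardinality. $N^{\theta}_{\beta\gamma}(t)$ denotes absolutely weighted $\beta\gamma$-summability of order $\theta$ (the first displayed condition with $\theta$), and $SP^{\theta}_{\beta\gamma}(t)$ denotes weighted $\beta\gamma$-pointwise statistical convergence of order $\theta$ (the second displayed condition with $\theta$). *)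

From HB Require Import structures.
From mathcomp Require Import all_boot all_order all_algebra.
From mathcomp Require Import all_classical all_reals all_analysis.
Set Implicit Arguments. Unset Strict Implicit. Unset Printing Implicit Defensive.
Import Order.TTheory GRing.Theory Num.Theory.
Import numFieldNormedType.Exports.
Local Open Scope classical_set_scope.
Local Open Scope ring_scope.

Section Fuzzy.
Context {R : realType}.

Definition is_fuzzy_real (u : R -> R) : Prop :=
  [/\ (forall y, 0 <= u y <= 1),
      (exists y, u y = 1),
      (forall y z (l : R), 0 <= l <= 1 ->
          Num.min (u y) (u z) <= u (l * y + (1 - l) * z)),
      (forall y (e : R), 0 < e -> \forall z \near y, u z < u y + e) &
      compact (closure [set y | 0 < u y])].

Definition fuzzy_cut (u : R -> R) (a : R) : set R :=
  if a == 0 then closure [set y | 0 < u y] else [set y | a <= u y].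

Definition cut_lo (u : R -> R) (a : R) : R := inf (fuzzy_cut u a).
Definition cut_hi (u : R -> R) (a : R) : R := sup (fuzzy_cut u a).

Definition fuzzy_dist (u v : R -> R) : R :=
  sup ((fun a => Num.max `|cut_lo u a - cut_lo v a| `|cut_hi u a - cut_hi v a|)
        @` `[0, 1]).

Definition sum_bg (beta gamma : R) (F : nat -> R) : R :=
  \sum_(k < (Num.truncn gamma).+1 | (0 < k)%N && (beta <= k%:R <= gamma)) F k.

Definition Tbg (beta gamma t : nat -> R) (n : nat) : R :=
  sum_bg (beta n) (gamma n) t.

Definition count_le (X : R) (P : nat -> bool) : nat :=
  #|[set k : 'I_(Num.truncn X).+1 | (0 < (k : nat))%N && ((k : nat)%:R <= X) && P k]|.

End Fuzzy.

From HB Require Import structures.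
From mathcomp Require Import all_boot all_order all_algebra.
From mathcomp Require Import all_classical all_reals all_analysis.
Import Order.TTheory GRing.Theory Num.Theory.
Import numFieldNormedType.Exports.
Local Open Scope classical_set_scope.
Local Open Scope ring_scope.

(* Once T_n < gamma_n, the hypothesis beta_n <= 1 puts every positive
   integer k <= T_n inside [beta_n, gamma_n].  A Markov-type count then gives
   eps * #{k <= T_n | eps <= t_k d_k} <= sum_{k in [beta_n, gamma_n]} t_k d_k,
   and since T_n >= 1 eventually, T_n^th1 <= T_n^th2; so the counting average
   of order th2 is squeezed by eps^-1 times the summability average of
   order th1. *)

Lemma lt_limn_einf_near {R : realType} (u : nat -> R) (c : R) :
  (c%:E < limn_einf (fun n => (u n)%:E))%E -> \forall n \near \oo, c < u n.
Proof.
rewrite limn_einf_lim.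
have := ereal_nondecreasing_cvgn (nondecreasing_einfs (fun n => (u n)%:E)).
move/(cvg_lim (@ereal_hausdorff R)) => -> /ereal_sup_gt [_ [N _ <-]] cN.
exists N => // n /= Nn.
have infN_le : (einfs (fun n => (u n)%:E) N <= (u n)%:E)%E.
  by apply: ereal_inf_lbound; exists n.
by rewrite -lte_fin; exact: lt_le_trans cN infN_le.
Qed.

Lemma near_lt_of_liminf_ratio {R : realType} (u v : nat -> R) :
  (\forall n \near \oo, 0 < v n) ->
  (1 < limn_einf (fun n => (u n / v n)%:E))%E ->
  \forall n \near \oo, v n < u n.
Proof.
move=> v_gt0 /lt_limn_einf_near ratio_gt1.
near=> n.
have vn_gt0 : 0 < v n by near: n.
have : 1 < u n / v n by near: n.
by rewrite ltr_pdivlMr // mul1r.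
Unshelve. all: by end_near.
Qed.

Lemma fuzzy_dist_ge0 {R : realType} (u v : R -> R) : 0 <= fuzzy_dist u v.
Proof.
rewrite /fuzzy_dist; set S := (X in sup X).
have [supS|/sup_out ->//] := pselect (has_sup S).
have S0 : S (Num.max `|cut_lo u 0 - cut_lo v 0| `|cut_hi u 0 - cut_hi v 0|).
  by exists 0 => //=; rewrite in_itv /= lexx ler01.
by apply: le_trans (ub_le_sup supS.2 S0); rewrite le_max normr_ge0.
Qed.

Lemma count_le_sum_bg {R : realType} (X beta gamma eps : R) (F : nat -> R) :
  0 < eps -> X < gamma -> beta <= 1 -> (forall k, 0 <= F k) ->
  (count_le X (fun k => eps <= F k))%:R <= eps^-1 * sum_bg beta gamma F.
Proof.
move=> eps_gt0 X_lt_gamma beta_le1 F_ge0.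
rewrite /count_le /sum_bg -sum1_card natr_sum.
pose P k := [&& (0 < k)%N, k%:R <= X & eps <= F k].
rewrite (eq_bigl (fun k : 'I_(Num.truncn X).+1 => P k)); last first.
  by move=> k; apply/idP/idP; rewrite in_setE /P andbA.
have le_bounds : ((Num.truncn X).+1 <= (Num.truncn gamma).+1)%N.
  by rewrite ltnS le_truncn // ltW.
rewrite (big_ord_widen_cond _ P (fun _ => 1 : R) le_bounds).
rewrite mulr_sumr big_mkcond [X in _ <= X]big_mkcond /=.
apply: ler_sum => i _.
case: ifP => [/andP[/and3P[i_gt0 iX epsF] _]|_]; last first.
  by case: ifP => _; rewrite ?mulr0 // mulr_ge0 // invr_ge0 ltW.
have i_in_range : beta <= i%:R <= gamma.
  by rewrite (le_trans beta_le1) ?ler1n // (le_trans iX) // ltW.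
by rewrite i_gt0 i_in_range ler_pdivlMl // mulr1.
Qed.

Lemma ler_inv_powR {R : realType} (x p q : R) :
  1 <= x -> p <= q -> (x `^ q)^-1 <= (x `^ p)^-1.
Proof.
move=> x_ge1 pq; have x_gt0 : 0 < x by exact: lt_le_trans x_ge1.
by rewrite lef_pV2 ?posrE ?powR_gt0 // ler_powR.
Qed.

Theorem theorem3p3 (R : realType) (beta gamma t : nat -> R) (th1 th2 a b : R)
  (fk : nat -> R -> R -> R) (f : R -> R -> R) :
  (forall n, 0 < beta n) -> (forall n, 0 < gamma n) ->
  {homo beta : m n / (m <= n)%N >-> m <= n} ->
  {homo gamma : m n / (m <= n)%N >-> m <= n} ->
  (forall n, beta n <= gamma n) ->
  (fun n => gamma n - beta n) @ \oo --> +oo ->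
  (forall n, 0 < t n) ->
  (0 < limn_einf (fun n => (t n)%:E))%E ->
  Tbg beta gamma t @ \oo --> +oo ->
  0 < th1 -> th1 <= th2 -> th2 <= 1 ->
  (1 < limn_einf (fun n => (gamma n / Tbg beta gamma t n)%:E))%E ->
  (forall n, beta n <= 1) ->
  (forall k x, a <= x <= b -> is_fuzzy_real (fk k x)) ->
  (forall x, a <= x <= b -> is_fuzzy_real (f x)) ->
  (forall x, a <= x <= b ->
     (fun n => (Tbg beta gamma t n `^ th1)^-1 *
        sum_bg (beta n) (gamma n) (fun k => t k * fuzzy_dist (fk k x) (f x)))
       @ \oo --> 0) ->
  forall (eps : R), 0 < eps -> forall x, a <= x <= b ->
    (fun n => (Tbg beta gamma t n `^ th2)^-1 *
       (count_le (Tbg beta gamma t n)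
          (fun k => eps <= t k * fuzzy_dist (fk k x) (f x)))%:R)
      @ \oo --> 0.
Proof.
move=> _ _ _ _ _ _ t_gt0 _ T_oo _ th12 _ ratio_gt1 beta_le1 _ _ summable
  eps eps_gt0 x xab.
set T := Tbg beta gamma t in T_oo ratio_gt1 *.
set S := fun n => sum_bg (beta n) (gamma n)
  (fun k => t k * fuzzy_dist (fk k x) (f x)).
have F_ge0 k : 0 <= t k * fuzzy_dist (fk k x) (f x).
  by rewrite mulr_ge0 ?fuzzy_dist_ge0 // ltW.
have S_ge0 n : 0 <= S n by apply: sumr_ge0 => k _.
have T_ge1 : \forall n \near \oo, 1 <= T n by move/cvgryPge : T_oo; apply.
have T_lt_gamma : \forall n \near \oo, T n < gamma n.
  apply: near_lt_of_liminf_ratio ratio_gt1.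
  by near=> n; apply: (@lt_le_trans _ _ 1) => //; near: n.
have bound_cvg0 : (fun n => eps^-1 * ((T n `^ th1)^-1 * S n)) @ \oo --> 0.
  by rewrite -(mulr0 eps^-1); exact: cvgM (cvg_cst _) (summable x xab).
apply: (squeeze_cvgr _ (cvg_cst 0) bound_cvg0).
near=> n.
have Tn_ge1 : 1 <= T n by near: n.
have Tn_lt_gamma : T n < gamma n by near: n.
have count_le_S := count_le_sum_bg _ _ _ _ _ eps_gt0 Tn_lt_gamma (beta_le1 n)
  F_ge0.
apply/andP; split; first by rewrite mulr_ge0 ?invr_ge0 ?powR_ge0.
rewrite mulrCA.
apply: le_trans (ler_wpM2l _ count_le_S) _; first by rewrite invr_ge0 powR_ge0.
have epsS_ge0 : 0 <= eps^-1 * S n.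
  by apply: mulr_ge0 (S_ge0 n); rewrite invr_ge0 ltW.
by rewrite ler_wpM2r // ler_inv_powR.
Unshelve. all: by end_near.
Qed.
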